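(* Let $\Gamma$ be a group that is nilpotent of class $\le n$, let $S\subseteq\Gamma\setminus\{\mathbb{I}\}$ be a generating set, $G:=\mathrm{Cay}(\Gamma,S)$, and let $r\ge\max\{2^{n+1},5\}$ be an integer. Let $h\in S$ be an involution such that $\{\mathbb{I},h\}$ is an $r$-local $2$-separator of $G$, and suppose that $G$ has no $r$-local cutvertex. Then: (i) if $g\in S$ traverses $\{\mathbb{I},h\}$ symmetrically, then $g$ and $h$ commute; (ii) if $g\in S$ traverses $\{\mathbb{I},h\}$ antisymmetrically but not symmetrically, then $gh$ is an involution.
   Context: Generating sets are closed under inverses; $\mathrm{Cay}(\Gamma,S)$ is the simple graph on $\Gamma$ with edges $\{g,gs\}$. $a\equiv b$ means $a=b$ or $a=b^{-1}$; $\Gamma$ is nilpotent of class $\le n$ if $[g,h]_n=\mathbb{I}$ for all $g\not\equiv h$, where $[g,h]_1=gh^{-1}g^{-1}h$ and $[g,h]_n$ is the reduced form of $g[g,h]_{n-1}^{-1}g^{-1}[g,h]_{n-1}$. Ball $B_r(v)$: subgraph of all vertices and edges on closed walks of length $\le r$ through $v$; $v$ is an $r$-local cutvertex if $B_r(v)-v$ is disconnected. For $X=\{v_0,v_1\}$, $N(X)$ is the set of vertices outside $X$ adjacent to $X$; the connectivity graph $C_r(v_0,v_1)$ has vertex set $N(X)$, $a,b$ adjacent if for some $i$ they lie in the same component of $B_r(v_i)-v_0-v_1$; $X$ is an $r$-local $2$-separator if $C_r(v_0,v_1)$ is disconnected and $d_G(v_0,v_1)\le r/2$; the $r$-local components at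 $X$ are the components of $C_r(v_0,v_1)$. An element $g\in S$ traverses $X$ (at $x\in X$) if $xg^{-1}$ and $xg$ lie in distinct $r$-local components at $X$ for some (the given) $x\in X$. When $h$ is an involution and $g$ traverses $\{\mathbb{I},h\}$, $g$ traverses it symmetrically if $g^{-1}$ and $hg$ lie in distinct $r$-local components at $\{\mathbb{I},h\}$, and antisymmetrically if $g^{-1}$ and $hg^{-1}$ lie in distinct $r$-local components at $\{\mathbb{I},h\}$. *)

From mathcomp Require Import all_boot.
From Stdlib Require Import Relation_Operators.
Set Implicit Arguments.
Unset Strict Implicit.
Unset Printing Implicit Defensive.
Local Open Scope group_scope.

Section Cayley.
Variable Gm : groupType.
Implicit Types (S : Gm -> Prop) (x y a b g h v : Gm).

Fixpoint itcomm (n : nat) g h : Gm :=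
  match n with
  | 0 => h
  | n'.+1 => g * (itcomm n' g h)^-1 * g^-1 * itcomm n' g h
  end.

Definition nilpotent_le (n : nat) : Prop :=
  forall g h, ~ (g = h \/ g = h^-1) -> itcomm n g h = 1.

Definition involution h : Prop := h * h = 1 /\ h <> 1.

Definition inv_closed S : Prop := forall s, S s -> S s^-1.
Definition generates S : Prop :=
  forall g, exists l : seq Gm, (forall s, s \in l -> S s) /\ g = foldr (fun a b => a * b) 1 l.

Definition cay_adj S x y : Prop := S (x^-1 * y).

Fixpoint is_walk S x (l : seq Gm) : Prop :=
  match l with
  | [::] => True
  | y :: l' => cay_adj S x y /\ is_walk S y l'
  end.

Fixpoint edge_on x (l : seq Gm) a b : Prop :=
  match l with
  | [::] => False
  | y :: l' => ((a = x /\ b = y) \/ (a = y /\ b = x)) \/ edge_on y l' a b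
  end.

Definition closed_walk_through S (r : nat) v x (l : seq Gm) : Prop :=
  is_walk S x l /\ last x l = x /\ size l <= r /\ v \in x :: l.

(* vertices and edges of the ball B_r(v) *)
Definition ball_vert S r v a : Prop :=
  exists x l, closed_walk_through S r v x l /\ a \in x :: l.
Definition ball_edge S r v a b : Prop :=
  exists x l, closed_walk_through S r v x l /\ edge_on x l a b.

Definition same_comp S r v (D : Gm -> Prop) a b : Prop :=
  ball_vert S r v a /\ ~ D a /\ ball_vert S r v b /\ ~ D b /\
  clos_refl_trans Gm (fun c d => ball_edge S r v c d /\ ~ D c /\ ~ D d) a b.

Definition local_cutvertex S r v : Prop :=
  exists a b, ball_vert S r v a /\ a <> v /\ ball_vert S r v b /\ b <> v /\
    ~ same_comp S r v (fun c => c = v) a b.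

Definition nbX S v0 v1 a : Prop :=
  a <> v0 /\ a <> v1 /\ (cay_adj S v0 a \/ cay_adj S v1 a).

Definition conn_adj S r (v0 v1 : Gm) a b : Prop :=
  nbX S v0 v1 a /\ nbX S v0 v1 b /\
  (same_comp S r v0 (fun c => c = v0 \/ c = v1) a b \/
   same_comp S r v1 (fun c => c = v0 \/ c = v1) a b).

Definition conn_conn S r (v0 v1 : Gm) a b : Prop :=
  nbX S v0 v1 a /\ nbX S v0 v1 b /\ clos_refl_trans Gm (conn_adj S r v0 v1) a b.

Definition distinct_comps S r (v0 v1 : Gm) a b : Prop :=
  nbX S v0 v1 a /\ nbX S v0 v1 b /\ ~ conn_conn S r v0 v1 a b.

Definition dist_le_half S r (v0 v1 : Gm) : Prop :=
  exists l, is_walk S v0 l /\ last v0 l = v1 /\ 2 * size l <= r.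

Definition local_2sep S r (v0 v1 : Gm) : Prop :=
  v0 <> v1 /\ (exists a b, distinct_comps S r v0 v1 a b) /\ dist_le_half S r v0 v1.

Definition traverses S r (v0 v1 : Gm) g : Prop :=
  exists x, (x = v0 \/ x = v1) /\ distinct_comps S r v0 v1 (x * g^-1) (x * g).

Definition traverses_sym S r h g : Prop :=
  traverses S r 1 h g /\ distinct_comps S r 1 h g^-1 (h * g).
Definition traverses_antisym S r h g : Prop :=
  traverses S r 1 h g /\ distinct_comps S r 1 h g^-1 (h * g^-1).

End Cayley.

From mathcomp Require Import all_boot zify.
From Stdlib Require Import Relation_Operators Classical.

(* A word x_1 ... x_m in {g, g^-1} with x_1 h x_2 h ... x_m h = 1 traces a
   closed walk of length 2m in the Cayley graph alternating g^{±1}-edges with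
   h-edges, the rungs {u, u h}.  Cut out a shortest stretch of it that returns to
   the rung it started from.  For every rung met strictly inside the stretch, the
   rest of the stretch closes up into a cycle of length at most r through that
   rung and otherwise avoiding it; translated so that the rung becomes {1, h},
   it puts the neighbours at which the walk enters and leaves the rung into one
   r-local component.  The same holds at the starting rung.
   Nilpotency provides such words of length 2^n: [g,h]_n for (i) and, h being
   an involution, [h,g]_n = (h g^-1 h g)^(2^(n-1)) for (ii).  A symmetric
   traversal forbids entering and leaving a rung by the same letter, so the
   letters of the stretch alternate; written out, [g,h]_n never has four
   alternating consecutive letters, so the stretch has length two, which says
   g h g^-1 h = 1.  An antisymmetric traversal forbids entering a rung by g and
   leaving it by g^-1; in (g^-1 h g h)^N this only allows stretches of length
   two, which make g and h commute and then violate the traversal at the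
   starting rung.  So the situation of (ii) never arises. *)

Set Implicit Arguments.
Unset Strict Implicit.
Unset Printing Implicit Defensive.
Local Open Scope group_scope.

Lemma clos_refl_trans_sym (A : Type) (R : A -> A -> Prop) :
  (forall a b, R a b -> R b a) ->
  forall a b, clos_refl_trans A R a b -> clos_refl_trans A R b a.
Proof.
move=> Rsym a b; elim=> [x y /Rsym|x|x y z _ IHxy _ IHyz].
- exact: rt_step.
- exact: rt_refl.
- exact: rt_trans IHyz IHxy.
Qed.

Lemma itcommS (Gm : groupType) n (x y : Gm) :
  itcomm n.+1 x y = x * (itcomm n x y)^-1 * x^-1 * itcomm n x y.
Proof. by []. Qed.

(** * Local components at a pair of vertices *)

Section CayleyGraph.
Variables (Gm : groupType) (S : Gm -> Prop) (r : nat).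
Implicit Types (a b c p v x y : Gm) (l M W : seq Gm) (D : Gm -> Prop).

Lemma cay_adj_mull c x y : cay_adj S x y -> cay_adj S (c * x) (c * y).
Proof. by rewrite /cay_adj invgM -mulgA mulKg. Qed.

Lemma cay_adj_sym x y : inv_closed S -> cay_adj S x y -> cay_adj S y x.
Proof. by move=> invS /invS; rewrite /cay_adj invgM invgK. Qed.

Lemma is_walk_cat x (s1 s2 : seq Gm) :
  is_walk S x (s1 ++ s2) <-> is_walk S x s1 /\ is_walk S (last x s1) s2.
Proof. by elim: s1 x => [|y s1 IH] x /=; [tauto | rewrite IH; tauto]. Qed.

Lemma is_walk_mull c x l :
  is_walk S x l -> is_walk S (c * x) [seq c * u | u <- l].
Proof.
by elim: l x => [|y l IH] x //= [xy yl]; split; [exact: cay_adj_mull | exact: IH].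
Qed.

Lemma edge_on_catl x (s1 s2 : seq Gm) a b : edge_on x s1 a b -> edge_on x (s1 ++ s2) a b.
Proof. by elim: s1 x => [|y s1 IH] x //= [E|E]; [left | right; exact: IH]. Qed.

Lemma edge_on_sym x l a b : edge_on x l a b -> edge_on x l b a.
Proof. by elim: l x => [|y l IH] x //= [E|E]; [left; tauto | right; exact: IH]. Qed.

Lemma same_comp_sym v D a b : same_comp S r v D a b -> same_comp S r v D b a.
Proof.
move=> [va [Da [vb [Db ab]]]]; do 4 (split => //).
apply: clos_refl_trans_sym ab => c d [[x [l [cw cd]]] DcDd].
by split; [exists x, l; split => //; exact: edge_on_sym | tauto].
Qed.

Lemma conn_conn_sym v0 v1 a b :
  conn_conn S r v0 v1 a b -> conn_conn S r v0 v1 b a.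
Proof.
move=> [Na [Nb ab]]; do 2 (split => //); apply: clos_refl_trans_sym ab.
by move=> c d [Nc [Nd [cd|cd]]]; do 2 (split => //); [left|right]; exact: same_comp_sym.
Qed.

Lemma closed_walk_through_mull c v x l :
  closed_walk_through S r v x l ->
  closed_walk_through S r (c * v) (c * x) [seq c * u | u <- l].
Proof.
move=> [walk [lx [len vl]]]; split; first exact: is_walk_mull.
split; first by rewrite last_map lx.
by rewrite size_map -map_cons; split => //; exact: map_f.
Qed.

Lemma same_comp_of_closed_walk v D x p M W :
  closed_walk_through S r v x (p :: M ++ W) -> (forall u, u \in p :: M -> ~ D u) ->
  same_comp S r v D p (last p M).
Proof.
move=> cw DpM.
have inW u : u \in p :: M -> ball_vert S r v u.
  by move=> uM; exists x, (p :: M ++ W); rewrite -cat_cons in_cons mem_cat uM orbT.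
split; first by apply: inW; exact: mem_head.
split; first by apply: DpM; exact: mem_head.
split; first by apply: inW; exact: mem_last.
split; first by apply: DpM; exact: mem_last.
set L := p :: M ++ W in cw inW.
have : forall a b, edge_on p M a b -> edge_on x L a b.
  by move=> a b ab; right; exact: edge_on_catl.
clearbody L; elim: M p DpM {inW} => [|q M IH] p DpM edges /=; first exact: rt_refl.
apply: rt_trans (IH q _ _).
- apply: rt_step; split; first by exists x, L; split => //; apply: edges; left; left.
  by split; apply: DpM; rewrite !inE eqxx ?orbT.
- by move=> u uM; apply: DpM; rewrite in_cons uM orbT.
- by move=> a b ab; apply: edges; right.
Qed.

End CayleyGraph.

(** * Rungs *)

Section Rungs.
Variables (Gm : groupType) (S : Gm -> Prop) (r : nat) (h : Gm).
Hypotheses (invS : inv_closed S) (Sh : S h) (hh : h * h = 1).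
Implicit Types (a b u w x y : Gm) (P : seq Gm).

Definition same_rung u w := w = u \/ w = u * h.

Lemma same_rung_mulh u : same_rung u (u * h).
Proof. by right. Qed.

Lemma same_rung_sym u w : same_rung u w -> same_rung w u.
Proof. by case=> ->; [left | right; rewrite -mulgA hh mulg1]. Qed.

Lemma same_rung_trans u v w : same_rung u v -> same_rung v w -> same_rung u w.
Proof. by case=> -> [] ->; [left | right | right | left; rewrite -mulgA hh mulg1]. Qed.

Lemma same_rung_mulr u y : same_rung u (u * y) -> y = 1 \/ y = h.
Proof. by case=> E; [left; apply: (mulgI u); rewrite mulg1 | right; apply: (mulgI u)]. Qed.

Lemma one_or_h_cancel x y : x = 1 \/ x = h -> x * y = 1 \/ x * y = h -> y = 1 \/ y = h.
Proof.
case=> ->; first by rewrite mul1g.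
by case=> E; [right; apply: (mulgI h); rewrite E hh | left; apply: (mulgI h); rewrite mulg1].
Qed.

Lemma closed_walk_of_rung_path a b P :
  is_walk S a (rcons P b) -> same_rung a b -> (size P).+2 <= r ->
  exists W, closed_walk_through S r a a (P ++ W).
Proof.
move=> walk ab len; exists (b :: if b == a then [::] else [:: a]).
have bah : b != a -> b = a * h by case: ab => [->|//]; rewrite eqxx.
split; last split; last split.
- move: walk; rewrite -cats1 !is_walk_cat /= => -[wP [Pb _]].
  do 2 split => //; case: eqP => [//|/eqP/bah ->]; split => //.
  by rewrite /cay_adj invgM mulgVK (mulg1_eq hh).
- by rewrite last_cat /=; case: eqP => [->|].
- by rewrite size_cat /=; case: eqP => _ /=; lia.
- exact: mem_head.
Qed.

Definition joined a b : Prop :=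
  forall x, x = 1 \/ x = h -> conn_conn S r 1 h (x * a) (x * b).

(* Translation by [x * a^-1] turns the rung [{a, a h}] into [{1, h}] and the
   cycle into a closed walk through [x]. *)
Lemma joined_of_rung_cycle a b P :
  P != [::] -> is_walk S a (rcons P b) -> same_rung a b ->
  (forall u, u \in P -> ~ same_rung a u) -> (size P).+2 <= r ->
  joined (a^-1 * head a P) (a^-1 * last a P).
Proof.
case: P => [//|p M] _ walk ab avoid len x x1h /=; rewrite !mulgA.
set c := x * a^-1.
have ca : c * a = x by rewrite mulgVK.
have off u : u \in p :: M -> ~ (c * u = 1 \/ c * u = h).
  move=> uP cu; apply: (avoid u uP).
  have : x * (a^-1 * u) = 1 \/ x * (a^-1 * u) = h by rewrite mulgA.
  move/(one_or_h_cancel x1h) => [E|E].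
  - by left; rewrite -(mulVKg a u) E mulg1.
  - by right; rewrite -(mulVKg a u) E.
have [W cw] := closed_walk_of_rung_path walk ab len.
have {}cw := closed_walk_through_mull c cw; rewrite ca /= map_cat in cw.
have comp : same_comp S r x (fun v => v = 1 \/ v = h) (c * p) (c * last p M).
  rewrite -(last_map (fun u => c * u)); apply: same_comp_of_closed_walk cw _.
  by move=> v; rewrite -map_cons => /mapP [u uP ->]; exact: off.
have [[ap _] Mb] : (cay_adj S a p /\ is_walk S p M) /\ cay_adj S (last p M) b.
  by move: walk; rewrite /= -cats1 is_walk_cat /=; tauto.
have cb : c * b = 1 \/ c * b = h.
  by case: ab => ->; rewrite ?mulgA ca; case: x1h => ->; rewrite ?mul1g ?hh; tauto.
have atx v : cay_adj S x v -> cay_adj S 1 v \/ cay_adj S h v.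
  by case: x1h => ->; tauto.
have Np : nbX S 1 h (c * p).
  have := off p (mem_head _ _); split; [tauto | split; [tauto|]].
  by apply: atx; rewrite -ca; exact: cay_adj_mull.
have Nl : nbX S 1 h (c * last p M).
  have := off _ (mem_last p M); split; [tauto | split; [tauto|]].
  have := cay_adj_sym invS (cay_adj_mull c Mb).
  by case: cb => ->; tauto.
do 2 split => //; apply: rt_step; do 2 split => //.
by case: x1h comp => ->; tauto.
Qed.

End Rungs.

(** * Engel words *)

Section BooleanWords.
Local Open Scope nat_scope.
Implicit Types (s : seq bool) (i p N : nat).

Definition engel_step s := true :: rev (map negb s) ++ behead s.

Definition engel_word k := iter k engel_step [:: true; false].

Definition alternating4 s i :=
  [&& nth false s i != nth false s i.+1, nth false s i.+1 != nth false s i.+2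
    & nth false s i.+2 != nth false s i.+3].

Definition no_alternating4 s := forall i, i + 3 < size s -> ~~ alternating4 s i.

(* The doubled letters at both ends keep [engel_step] from creating an
   alternating run across its junction. *)
Definition engel_shape s := [/\ 3 < size s, nth false s 0 && nth false s 1,
  ~~ nth false s (size s).-1 && ~~ nth false s (size s).-2,
  nth false s 2 || ~~ nth false s 3 & no_alternating4 s].

Lemma size_engel_step s : 0 < size s -> size (engel_step s) = (size s).*2.
Proof. by rewrite /engel_step /= size_cat size_rev size_map size_behead; lia. Qed.

Lemma size_engel_word k : size (engel_word k) = 2 ^ k.+1.
Proof.
elim: k => [|k IH] //; rewrite /engel_word iterS -/(engel_word k).
by rewrite size_engel_step IH ?expn_gt0 // (expnS 2 k.+1) mul2n.
Qed.

Lemma nth_engel_step s p : 0 < size s ->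
  nth false (engel_step s) p = if p == 0 then true
    else if p <= size s then ~~ nth false s (size s - p) else nth false s (p - size s).
Proof.
case: p => [//|p] s0 /=; rewrite nth_cat size_rev size_map.
case: ltnP => ps; first by rewrite nth_rev ?size_map // (nth_map false) //; lia.
by rewrite nth_behead; congr nth; lia.
Qed.

Lemma engel_step_no_alternating4 s : engel_shape s -> no_alternating4 (engel_step s).
Proof.
case=> s4 /andP[s0 s1] /andP[sl1 sl2] s23 alt p; rewrite size_engel_step => [ps|]; last lia.
rewrite /alternating4 !nth_engel_step; try lia.
set m := size s in s4 alt ps sl1 sl2 *.
case: (posnP p) => [->|p0] /=.
  have -> : (0 < m) = true by lia.
  by rewrite (_ : m - 1 = m.-1) ?(negbTE sl1) //; lia.
case: (leqP p.+3 m) => [p3|p3].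
  have -> : (p <= m) = true by lia.
  have -> : (p < m) = true by lia.
  have -> : (p.+1 < m) = true by lia.
  set q := (m - p.+3).
  have -> : (m - p = q.+3) by lia.
  have -> : (m - p.+1 = q.+2) by lia.
  have -> : (m - p.+2 = q.+1) by lia.
  have := alt q; rewrite /alternating4 => /(_ ltac:(lia)).
  by case: (nth false s q) (nth false s q.+1) (nth false s q.+2) (nth false s q.+3) => [] [] [] [].
case: (ltnP m p) => pm.
  have -> : (p < m) = false by lia.
  have -> : (p.+1 < m) = false by lia.
  rewrite !subSn; try lia.
  by apply: alt; lia.
have [->|[->|->]] : p = m.-2 \/ p = m.-1 \/ p = m by lia.
- have -> : (m.-2 < m) = true by lia.
  have -> : (m.-2.+1 < m) = true by lia.
  have -> : (m - m.-2.+1 = 1) by lia.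
  have -> : (m - m.-2.+2 = 0) by lia.
  by rewrite s0 s1 andbF.
- have -> : (m.-1 < m) = true by lia.
  have -> : (m.-1.+1 < m) = false by lia.
  have -> : (m - m.-1.+1 = 0) by lia.
  have -> : (m - m.-1 = 1) by lia.
  by rewrite s0 s1.
- rewrite ltnn ltnNge leqnSn subnn.
  have -> : (m.+1 - m = 1) by lia.
  have -> : (m.+2 - m = 2) by lia.
  have -> : (m.+3 - m = 3) by lia.
  by rewrite s0 s1 /=; case: (nth false s 2) (nth false s 3) s23 => [] [].
Qed.

Lemma engel_shape_step s : engel_shape s -> engel_shape (engel_step s).
Proof.
move=> sh; have alt := engel_step_no_alternating4 sh.
case: sh => s4 /andP[s0 s1] /andP[sl1 sl2] _ _.
have s0' : 0 < size s by lia.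
rewrite /engel_shape size_engel_step // !nth_engel_step //=.
have -> : (1 <= size s) = true by lia.
have -> : (2 <= size s) = true by lia.
have -> : ((size s).*2.-1 == 0) = false by lia.
have -> : ((size s).*2.-2 == 0) = false by lia.
have -> : ((size s).*2.-1 <= size s) = false by lia.
have -> : ((size s).*2.-2 <= size s) = false by lia.
have -> : (size s - 1 = (size s).-1) by lia.
have -> : (size s - 2 = (size s).-2) by lia.
have -> : ((size s).*2.-1 - size s = (size s).-1) by lia.
have -> : ((size s).*2.-2 - size s = (size s).-2) by lia.
by rewrite (negbTE sl1) (negbTE sl2); split => //; lia.
Qed.

Lemma engel_shape_word k : engel_shape (engel_word k.+1).
Proof.
elim: k => [|k IH]; last exact: engel_shape_step.
by split => // -[|i] //; rewrite addn3.
Qed.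

Lemma no_alternating4_engel_word k : no_alternating4 (engel_word k).
Proof. by case: k => [i|k]; [rewrite addn3 | case: (engel_shape_word k)]. Qed.

Definition alt_word N := flatten (nseq N [:: false; true]).

Lemma size_alt_word N : size (alt_word N) = N.*2.
Proof. by elim: N => [|N IH] //=; rewrite IH doubleS. Qed.

Lemma nth_alt_word N i : i < N.*2 -> nth false (alt_word N) i = odd i.
Proof.
by elim: N i => [|N IH] [|[|i]] //= lt; rewrite IH ?negbK.
Qed.

End BooleanWords.

Lemma exists_minimal (P : nat -> Prop) :
  (exists n, P n) -> exists n, P n /\ forall m, m < n -> ~ P m.
Proof.
move=> [n Pn]; elim/ltn_ind: n Pn => n IH Pn.
case: (classic (exists m, m < n /\ P m)) => [[m [mn Pm]]|no]; first exact: IH mn Pm.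
by exists n; split => // m mn Pm; apply: no; exists m.
Qed.

(** * The walk of a word *)

Section AlternatingWalk.
Variables (Gm : groupType) (S : Gm -> Prop) (r : nat) (h g : Gm).
Hypotheses (invS : inv_closed S) (Sh : S h) (hh : h * h = 1) (Sg : S g).
Implicit Types (e : seq bool) (u : Gm).

(* Words are [seq bool], [true] standing for [g] and [false] for [g^-1]. *)
Definition letter (b : bool) := if b then g else g^-1.

Fixpoint hwalk e l : Gm :=
  if l is l'.+1 then hwalk e l' * letter (nth false e l') * h else 1.

Fixpoint hwalk_path e i n : seq Gm :=
  if n is n'.+1 then hwalk e i.+1 * h :: hwalk e i.+1 :: hwalk_path e i.+1 n' else [::].

Lemma letter_in_S b : S (letter b).
Proof. by case: b => /=; [|apply: invS]. Qed.

Lemma hwalkS_mulh e i : hwalk e i.+1 * h = hwalk e i * letter (nth false e i).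
Proof. by rewrite /= -mulgA hh mulg1. Qed.

Lemma hwalk_pred e i : 0 < i ->
  (hwalk e i)^-1 * hwalk e i.-1 = h * (letter (nth false e i.-1))^-1.
Proof. by case: i => // i _ /=; rewrite !invgM (mulg1_eq hh) -mulgA mulgVK. Qed.

Lemma cay_adj_mulh u : cay_adj S (u * h) u.
Proof. by rewrite /cay_adj invgM mulgVK (mulg1_eq hh). Qed.

Lemma cay_adj_hwalk e i : cay_adj S (hwalk e i) (hwalk e i.+1 * h).
Proof. by rewrite hwalkS_mulh /cay_adj mulKg; exact: letter_in_S. Qed.

Lemma is_walk_hwalk_path e i n : is_walk S (hwalk e i) (hwalk_path e i n).
Proof.
elim: n i => [|n IH] i //=.
by split; [exact: cay_adj_hwalk | split; [exact: cay_adj_mulh | exact: IH]].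
Qed.

Lemma last_hwalk_path e i n : last (hwalk e i) (hwalk_path e i n) = hwalk e (i + n).
Proof. by elim: n i => [|n IH] i; rewrite ?addn0 // -addSnnS -IH. Qed.

Lemma size_hwalk_path e i n : size (hwalk_path e i n) = (2 * n)%N.
Proof. by elim: n i => [|n IH] i //=; rewrite IH; lia. Qed.

Lemma head_hwalk_path e i n : 0 < n -> head (hwalk e i) (hwalk_path e i n) = hwalk e i.+1 * h.
Proof. by case: n. Qed.

Lemma mem_hwalk_path e i n u : u \in hwalk_path e i n ->
  exists2 l, i < l <= i + n & same_rung h (hwalk e l) u.
Proof.
elim: n i => [|n IH] i //=; rewrite !inE => /orP[/eqP->|/orP[/eqP->|/IH[l il lu]]].
- by exists i.+1; [lia | right].
- by exists i.+1; [lia | left].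
- by exists l; [lia | ].
Qed.

Lemma is_walk_hwalk_path_rcons e i n :
  is_walk S (hwalk e i) (rcons (hwalk_path e i n) (hwalk e (i + n).+1 * h)).
Proof.
rewrite -cats1 is_walk_cat last_hwalk_path; split; first exact: is_walk_hwalk_path.
by split => //; exact: cay_adj_hwalk.
Qed.

Lemma hwalk_path_off_rung e i n v :
  (forall l, i < l <= i + n -> ~ same_rung h v (hwalk e l)) ->
  forall u, u \in hwalk_path e i n -> ~ same_rung h v u.
Proof.
move=> off u /mem_hwalk_path [l il lu] vu.
by apply: (off l il); apply: same_rung_trans vu (same_rung_sym hh lu).
Qed.

Lemma conjg_h x : x ^ h = h * x * h.
Proof. by rewrite conjgE (mulg1_eq hh) mulgA. Qed.

Definition word_val e : Gm := foldr (fun b w => letter b * h * w) 1 e.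

Lemma word_val_cons b e : word_val (b :: e) = letter b * h * word_val e.
Proof. by []. Qed.

Lemma word_val_cat e1 e2 : word_val (e1 ++ e2) = word_val e1 * word_val e2.
Proof. by elim: e1 => [|b e1 IH] /=; rewrite ?mul1g // IH !mulgA. Qed.

Lemma hwalk_size e : hwalk e (size e) = word_val e.
Proof.
suff prefix l : l <= size e -> hwalk e l = word_val (take l e).
  by rewrite prefix // take_size.
elim: l => [|l IH] le; first by rewrite take0.
by rewrite (take_nth false le) -cats1 word_val_cat /= IH 1?ltnW // mulg1 !mulgA.
Qed.

Lemma letter_negb b : letter (~~ b) = (letter b)^-1.
Proof. by case: b => /=; rewrite ?invgK. Qed.

Lemma word_val_rev_negb e : word_val (rev (map negb e)) = h * (word_val e)^-1 * h.
Proof.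
elim: e => [|b e IH]; first by rewrite /= invg1 mulg1 hh.
rewrite /= rev_cons -cats1 word_val_cat IH /= letter_negb mulg1 !invgM (mulg1_eq hh).
by rewrite !mulgA.
Qed.

Lemma word_val_engel k : word_val (engel_word k) = itcomm k.+1 g h.
Proof.
elim: k => [|k IH]; first by rewrite /= mulg1 (mulg1_eq hh) !mulgA.
have [e' E] : exists e', engel_word k = true :: e' by case: k {IH} => [|k]; eexists.
rewrite /engel_word iterS -/(engel_word k) itcommS -IH E /engel_step.
rewrite !word_val_cons word_val_cat word_val_rev_negb word_val_cons /= !invgM (mulg1_eq hh) !mulgA.
by rewrite mulgVK -(mulgA g h h) hh mulg1.
Qed.

Lemma word_val_alt N : word_val (alt_word N) = (g^-1 * h * g * h) ^+ N.
Proof. by elim: N => [|N IH] //=; rewrite expgS -IH !mulgA. Qed.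

Lemma itcomm_swap k : itcomm k.+1 h g = (h * g^-1 * h * g) ^+ (2 ^ k).
Proof.
elim: k => [|k IH]; first by rewrite /= (mulg1_eq hh).
rewrite itcommS IH (mulg1_eq hh) -expVgn -conjg_h conjXg conjg_h.
rewrite !invgM invgK (mulg1_eq hh) !mulgA -(mulgA _ h h) hh mulg1.
by rewrite -expgnDr addnn -mul2n -expnS.
Qed.

Lemma word_val_alt_itcomm n : 0 < n ->
  word_val (alt_word (2 ^ n.-1)) = h * itcomm n h g * h.
Proof.
case: n => // n _; rewrite word_val_alt itcomm_swap.
by rewrite -conjg_h conjXg conjg_h !mulgA hh mul1g.
Qed.

Hypotheses (g1 : g <> 1) (gh : g <> h).

Lemma not_same_rung_hwalkS e i : ~ same_rung h (hwalk e i) (hwalk e i.+1).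
Proof.
rewrite /= -mulgA => /same_rung_mulr; case: (nth false e i) => /= -[] E.
- by apply: gh; apply: (mulIg h); rewrite E hh.
- by apply: g1; apply: (mulIg h); rewrite E mul1g.
- by apply: gh; rewrite -[g]invgK -(mulg1_eq hh); congr (_^-1); apply: (mulIg h); rewrite E hh.
- by apply: g1; rewrite -[g]invgK -invg1; congr (_^-1); apply: (mulIg h); rewrite E mul1g.
Qed.

Definition shortest_return e j k := [/\ j < k <= size e,
  same_rung h (hwalk e j) (hwalk e k) &
  forall l1 l2, l1 < l2 <= size e -> l2 - l1 < k - j ->
    ~ same_rung h (hwalk e l1) (hwalk e l2)].

Lemma exists_shortest_return e :
  0 < size e -> hwalk e (size e) = 1 -> exists j k, shortest_return e j k.
Proof.
move=> e0 closed.
have [d [[j [d0 jd ret]] dmin]] := exists_minimal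
  (P := fun d => exists j, [/\ 0 < d, j + d <= size e & same_rung h (hwalk e j) (hwalk e (j + d))])
  (ex_intro _ (size e) (ex_intro _ 0 (And3 e0 (leqnn _) (or_introl closed)))).
exists j, (j + d); split => [|//|l1 l2 l12 short R]; first lia.
apply: (dmin (l2 - l1)); first lia.
by exists l1; rewrite subnKC; [split => //; lia | lia].
Qed.

Lemma shortest_return_gap e j k : shortest_return e j k -> 1 < k - j.
Proof.
case=> jk R _; case: (ltnP 1 (k - j)) => // short.
have kj : k = j.+1 by lia.
by rewrite kj in R; move/not_same_rung_hwalkS: R.
Qed.

Lemma walk_back_to_start e j k i : shortest_return e j k -> j < i < k ->
  exists A : seq Gm, [/\ A != [::], is_walk S (hwalk e i) A, last (hwalk e i) A = hwalk e j,
    head (hwalk e i) A = hwalk e i.+1 * h &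
    (forall u, u \in A -> ~ same_rung h (hwalk e i) u) /\ (size A <= 2 * (k - i))%N].
Proof.
case=> jk R NR ijk.
have off n : i + n <= k ->
    forall u, u \in hwalk_path e i n -> ~ same_rung h (hwalk e i) u.
  by move=> ink; apply: hwalk_path_off_rung => l il; apply: NR; lia.
case: R => Rk.
- exists (hwalk_path e i (k - i)); split.
  + by rewrite -size_eq0 size_hwalk_path; lia.
  + exact: is_walk_hwalk_path.
  + by rewrite last_hwalk_path subnKC // ltnW //; case/andP: ijk.
  + by rewrite head_hwalk_path // subn_gt0; case/andP: ijk.
  + by split; [apply: off; lia | rewrite size_hwalk_path].
- set n := (k - i).-1.
  have ink : (i + n).+1 = k by lia.
  clearbody n; exists (rcons (hwalk_path e i n) (hwalk e k * h)); split.
  + by rewrite -size_eq0 size_rcons.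
  + by rewrite -ink; exact: is_walk_hwalk_path_rcons.
  + by rewrite last_rcons Rk -mulgA hh mulg1.
  + by case: n ink => [|n'] ink //=; rewrite -ink addn0.
  + split; last by rewrite size_rcons size_hwalk_path; lia.
    move=> u; rewrite mem_rcons in_cons => /orP[/eqP ->|]; last by apply: off; lia.
    move=> Ru; apply: (NR i k); [lia | lia | ].
    exact: same_rung_trans Ru (same_rung_sym hh (same_rung_mulh _ _)).
Qed.

Section ShortestReturn.
Variables (e : seq bool) (j k : nat).
Hypotheses (ret : shortest_return e j k) (len : (2 * size e <= r)%N).

Lemma joined_at_return :
  joined S r h (letter (nth false e j)) ((hwalk e j)^-1 * hwalk e k.-1).
Proof.
case: (ret) => jk R NR; have gap := shortest_return_gap ret.
set n := (k - j).-1.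
have jnk : (j + n).+1 = k by lia.
have := @joined_of_rung_cycle _ S r h invS Sh hh (hwalk e j) (hwalk e k * h) (hwalk_path e j n).
rewrite head_hwalk_path ?hwalkS_mulh ?mulKg ?last_hwalk_path; try lia.
have -> : j + n = k.-1 by lia.
apply.
- by rewrite -size_eq0 size_hwalk_path; lia.
- by rewrite -jnk; exact: is_walk_hwalk_path_rcons.
- exact: same_rung_trans R (same_rung_mulh _ _).
- by apply: hwalk_path_off_rung => l jl; apply: NR; lia.
- by rewrite size_hwalk_path; lia.
Qed.

Lemma joined_inside i : j < i < k ->
  joined S r h (letter (nth false e i)) ((hwalk e i)^-1 * hwalk e i.-1).
Proof.
move=> ijk; case: ret => jk R NR.
have [A [A0 wA lA hA [offA sA]]] := walk_back_to_start ret ijk.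
set n := (i - j).-1.
have jni : (j + n).+1 = i by lia.
have := @joined_of_rung_cycle _ S r h invS Sh hh (hwalk e i) (hwalk e i * h) (A ++ hwalk_path e j n).
have -> : head (hwalk e i) (A ++ hwalk_path e j n) = head (hwalk e i) A by case: (A) A0.
rewrite hA hwalkS_mulh mulKg last_cat lA last_hwalk_path.
have -> : j + n = i.-1 by lia.
apply.
- by rewrite -size_eq0 size_cat addn_eq0 size_eq0 negb_and A0.
- rewrite rcons_cat is_walk_cat lA; split => //.
  by rewrite -jni; exact: is_walk_hwalk_path_rcons.
- exact: same_rung_mulh.
- move=> u; rewrite mem_cat => /orP[/offA //|]; apply: hwalk_path_off_rung => l jl.
  by move/(same_rung_sym hh); apply: NR; lia.
- by rewrite size_cat size_hwalk_path; lia.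
Qed.

End ShortestReturn.

(** * Traversals *)

Hypothesis h1 : h <> 1.

Lemma commute_of_rung_return2 e j :
  nth false e j.+1 = ~~ nth false e j ->
  same_rung h (hwalk e j) (hwalk e j.+2) -> commute g h.
Proof.
set x := letter (nth false e j) => ej.
have -> : hwalk e j.+2 = hwalk e j * (x * h * x^-1 * h).
  by rewrite /= ej letter_negb !mulgA.
case/same_rung_mulr => R.
- have xh : x * h * x^-1 = h by apply: (mulIg h); rewrite R hh.
  have : commute x h by rewrite /commute -[h in RHS]xh mulgVK.
  rewrite /x; case: (nth false e j) => //= /commute_sym /commuteV.
  by rewrite invgK => /commute_sym.
- have xh : x * h * x^-1 = 1 by apply: (mulIg h); rewrite R mul1g.
  by case: h1; apply: (mulgI x); apply: (mulIg x^-1); rewrite xh mulg1 mulgV.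
Qed.

Section Symmetric.
Hypothesis sym : ~ conn_conn S r 1 h g^-1 (h * g).
Hypothesis trav : exists x, (x = 1 \/ x = h) /\ ~ conn_conn S r 1 h (x * g^-1) (x * g).

Lemma not_joined_turn b : ~ joined S r h (letter b) (h * (letter b)^-1).
Proof.
case: b => /= J.
- by apply: sym; apply: conn_conn_sym; have := J h (or_intror erefl); rewrite mulgA hh mul1g.
- by apply: sym; have := J 1 (or_introl erefl); rewrite !mul1g invgK.
Qed.

Lemma not_joined_return b : ~ joined S r h (letter b) (letter b)^-1.
Proof.
have [x [x1h nx]] := trav; case: b => /= J; apply: nx; have := J x x1h.
- exact: conn_conn_sym.
- by rewrite invgK.
Qed.

Lemma shortest_return_turns e j k : shortest_return e j k -> (2 * size e <= r)%N ->
  (forall i, j < i < k -> nth false e i.-1 != nth false e i) /\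
  nth false e j != nth false e k.-1.
Proof.
move=> ret len; case: (ret) => jk R _; split.
  move=> i ijk; apply/eqP => E.
  have := joined_inside ret len ijk.
  by rewrite hwalk_pred // -?E; [exact: not_joined_turn | lia].
apply/eqP => E; have := joined_at_return ret len.
have k0 : 0 < k by lia.
have /(canRL (mulVKg _)) -> := hwalk_pred e k0.
rewrite -E; case: R => ->; rewrite ?mulKg; first exact: not_joined_turn.
by rewrite -mulgA mulKg mulgA hh mul1g; exact: not_joined_return.
Qed.

Lemma commute_of_symmetric_traversal e : 0 < size e -> (2 * size e <= r)%N ->
  word_val e = 1 -> no_alternating4 e -> commute g h.
Proof.
move=> e0 len closed alt.
rewrite -hwalk_size // in closed.
have [j [k ret]] := exists_shortest_return e0 closed.
have gap := shortest_return_gap ret.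
have [turn ends] := shortest_return_turns ret len.
case: (ret) => jk R _.
have t1 : nth false e j != nth false e j.+1 by apply: turn; lia.
have kj : k = j.+2.
  have short : k - j <= 3.
    rewrite leqNgt; apply/negP => long; case/negP: (alt j ltac:(lia)).
    by rewrite /alternating4 t1 (turn j.+2) ?(turn j.+3) //; lia.
  have three : k - j != 3.
    apply/eqP => three; have t2 : nth false e j.+1 != nth false e j.+2 by apply: turn; lia.
    move: ends t1 t2; rewrite (_ : k.-1 = j.+2); last by lia.
    by case: (nth false e j) (nth false e j.+1) (nth false e j.+2) => [] [] [].
  lia.
rewrite kj in R; apply: commute_of_rung_return2 R.
by move: t1; case: (nth false e j) (nth false e j.+1) => [] [].
Qed.

End Symmetric.

Section Antisymmetric.
Hypothesis anti : ~ conn_conn S r 1 h g^-1 (h * g^-1).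

Lemma alt_word_not_closed N : 0 < N -> N.*2.*2 <= r -> word_val (alt_word N) <> 1.
Proof.
set e := alt_word N => N0 len closed.
have se : size e = N.*2 by exact: size_alt_word.
have e0 : 0 < size e by rewrite se; lia.
have {}len : (2 * size e <= r)%N by rewrite se; lia.
rewrite -hwalk_size // in closed.
have [j [k ret]] := exists_shortest_return e0 closed.
have gap := shortest_return_gap ret.
case: (ret) => jk R _; rewrite se in jk.
have odd_inside i : j < i < k -> odd i.
  move=> ijk; apply/negPn/negP => even_i; apply: anti.
  have := joined_inside ret len ijk (or_introl erefl).
  rewrite hwalk_pred; last by lia.
  have odd_pred : odd i.-1 by case: i ijk even_i => //= i _; rewrite negbK.
  by rewrite !mul1g !nth_alt_word ?(negbTE even_i) ?odd_pred //; lia.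
have even_j : ~~ odd j by have := odd_inside j.+1 ltac:(lia).
have kj : k = j.+2.
  case: (ltnP j.+2 k) => [long|]; last by lia.
  by have := odd_inside j.+2 ltac:(lia); rewrite /= (negbTE even_j).
have ej : nth false e j = false by rewrite nth_alt_word ?(negbTE even_j) //; lia.
have ej1 : nth false e j.+1 = ~~ nth false e j by rewrite !nth_alt_word //; lia.
rewrite kj in R; have gh_comm := commute_of_rung_return2 ej1 R.
apply: anti; have := joined_at_return ret len (or_introl erefl).
have commVh : commute g^-1 h := commute_sym (commuteV (commute_sym gh_comm)).
by rewrite kj /= ej /= !mul1g -mulgA mulKg commVh.
Qed.

End Antisymmetric.

End AlternatingWalk.

Theorem proposition8p4 (Gm : groupType) (n : nat) (Sg : Gm -> Prop) (r : nat) (h : Gm) :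
  (1 <= n)%N ->
  nilpotent_le Gm n ->
  inv_closed Sg -> ~ Sg 1 -> generates Sg ->
  (maxn (2 ^ (n + 1)) 5 <= r)%N ->
  Sg h -> involution h ->
  local_2sep Sg r 1 h ->
  (forall v, ~ local_cutvertex Sg r v) ->
  (forall g, Sg g -> traverses_sym Sg r h g -> g * h = h * g) /\
  (forall g, Sg g -> traverses_antisym Sg r h g -> ~ traverses_sym Sg r h g ->
     involution (g * h)).
Proof.
move=> n1 nil invS notS1 _ rn Sh [hh h1] _ _.
have len : (2 * 2 ^ n <= r)%N by apply: leq_trans rn; rewrite addn1 -expnS leq_maxl.
have g1 g : Sg g -> g <> 1 by move=> Sg1 g1; apply: notS1; rewrite -g1.
have gh g : nbX Sg 1 h g^-1 -> g <> h by move=> [_ [ginvh _]] gh; rewrite gh (mulg1_eq hh) in ginvh.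
have comm_gh g : g <> h -> itcomm n g h = 1.
  by move=> ng; apply: nil => -[] E; apply: ng; rewrite E ?(mulg1_eq hh).
have comm_hg g : g <> h -> itcomm n h g = 1.
  move=> ng; apply: nil => -[] E; apply: ng; first by rewrite E.
  by rewrite -(invgK g) -E (mulg1_eq hh).
split=> [g Sg' [[x [x1h [_ [_ trav]]]] [Nginv [_ sym]]]|g Sg' [_ [Nginv [_ anti]]] _].
- have ng := gh g Nginv.
  have size_e : size (engel_word n.-1) = (2 ^ n)%N by rewrite size_engel_word prednK.
  apply: (commute_of_symmetric_traversal invS Sh hh Sg' (g1 g Sg') ng h1 sym
    (ex_intro _ x (conj x1h trav)) (e := engel_word n.-1)).
  + by rewrite size_e expn_gt0.
  + by rewrite size_e.
  + by rewrite word_val_engel // prednK // comm_gh.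
  + exact: no_alternating4_engel_word.
- exfalso; have ng := gh g Nginv.
  apply: (alt_word_not_closed invS Sh hh Sg' (g1 g Sg') ng h1 anti (N := (2 ^ n.-1)%N)).
  + by rewrite expn_gt0.
  + by rewrite -!mul2n -expnS prednK.
  + by rewrite word_val_alt_itcomm // comm_hg // mulg1.
Qed.
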